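(* Let $h>0$, $k\in\mathbb{N}$, $\beta>0$, $f(x)=hx^k$ and $\mathcal{B}(\alpha)=f(\alpha)+\sqrt2\beta\sqrt{1-\alpha^2}$. If $\beta<\beta_c(k,h)$, then every global maximizer $\hat\alpha$ of $\mathcal{B}$ on $(-1,1)$ satisfies $\mathcal{B}''(\hat\alpha)<0$.
   Context: $\beta_c(1,h)=\infty$, $\beta_c(2,h)=\sqrt2h$, and for $k\ge3$, $\beta_c(k,h)=\frac{h}{\sqrt2}\frac{k-1}{k-2}\left(1-\frac{1}{(k-1)^2}\right)^{k/2}$. *)

From Stdlib Require Import Reals.
From Coquelicot Require Import Coquelicot.
Open Scope R_scope.

Definition f_pow (h : R) (k : nat) (x : R) : R := h * x ^ k.

Definition Bfun (h : R) (k : nat) (beta : R) (a : R) : R :=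
  f_pow h k a + sqrt 2 * beta * sqrt (1 - a ^ 2).

(* Critical temperature beta_c(k,h) as an extended real:
   k = 1 : +oo ; k = 2 : sqrt 2 * h ;
   k >= 3 : h/sqrt 2 * (k-1)/(k-2) * (1 - 1/(k-1)^2)^(k/2).
   (The value at k = 0 is irrelevant: the theorem assumes k >= 1.) *)
Definition beta_c (k : nat) (h : R) : Rbar :=
  match k with
  | 1%nat => p_infty
  | 2%nat => Finite (sqrt 2 * h)
  | _ => Finite (h / sqrt 2 * ((INR k - 1) / (INR k - 2))
                 * Rpower (1 - 1 / (INR k - 1) ^ 2) (INR k / 2))
  end.

Definition is_global_max_on_open_unit (g : R -> R) (a : R) : Prop :=
  -1 < a < 1 /\ forall x, -1 < x < 1 -> g x <= g a.

(* At an interior maximum B' = 0 and B'' <= 0, so it suffices to exclude a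
   degenerate critical point B'(a) = B''(a) = 0.  With s = sqrt (1 - a^2) and
   c = sqrt 2 * beta these equations read h k a^(k-1) = c a / s and
   h k (k-1) a^(k-2) = c / s^3.  For k = 1 the second one is impossible; for
   k = 2 they force a = 0 and c = 2h, i.e. beta = beta_c; for k >= 3 they force
   a <> 0, (k-1) s^2 = 1 and c^2 = h^2 k^2 ((k-2)/(k-1))^(k-2) / (k-1).  This
   is at least 2 beta_c^2, the ratio being (k/(k-1))^(k-2) / (k-1) <= 1 by
   Bernoulli's inequality.  In each case beta >= beta_c. *)

From Stdlib Require Import Reals Lra Lia Psatz.
From Coquelicot Require Import Coquelicot.
Open Scope R_scope.

Lemma is_derive_root_pos_right (g : R -> R) a l :
  g a = 0 -> is_derive g a l -> 0 < l ->
  exists d : posreal, forall y, 0 < y < d -> 0 < g (a + y).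
Proof.
  intros ga Hg lpos.
  apply is_derive_Reals in Hg.
  destruct (Hg (l / 2) ltac:(lra)) as [d Hd].
  exists d; intros y Hy.
  assert (slope : l / 2 < g (a + y) / y).
  { assert (Hy' : Rabs y < d) by (rewrite Rabs_pos_eq; lra).
    specialize (Hd y ltac:(lra) Hy').
    rewrite ga, Rminus_0_r in Hd.
    apply Rabs_def2 in Hd; lra. }
  replace (g (a + y)) with (g (a + y) / y * y) by (field; lra).
  apply Rmult_lt_0_compat; lra.
Qed.

Lemma derive_eq0_at_interior_max (f : R -> R) lo hi a l :
  lo < a < hi -> is_derive f a l ->
  (forall x, lo < x < hi -> f x <= f a) -> l = 0.
Proof.
  intros [Hlo Hhi] Hf Hmax.
  apply is_derive_Reals in Hf.
  exact (deriv_maximum f lo hi a (exist _ l Hf) Hlo Hhi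
           (fun x H1 H2 => Hmax x (conj H1 H2))).
Qed.

Lemma derive2_nonpos_at_interior_max (f df : R -> R) lo hi a l :
  lo < a < hi -> (forall x, lo < x < hi -> is_derive f x (df x)) ->
  is_derive df a l -> (forall x, lo < x < hi -> f x <= f a) -> l <= 0.
Proof.
  intros Ha Hf Hdf Hmax.
  apply Rnot_lt_le; intros lpos.
  assert (crit : df a = 0)
    by exact (derive_eq0_at_interior_max f lo hi a _ Ha (Hf a Ha) Hmax).
  destruct (is_derive_root_pos_right df a l crit Hdf lpos) as [d Hpos].
  set (t := Rmin d (hi - a) / 2).
  assert (Ht : 0 < t < d /\ t < hi - a).
  { assert (0 < Rmin d (hi - a)) by (apply Rmin_glb_lt; [apply cond_pos | lra]).
    pose proof (Rmin_l d (hi - a)); pose proof (Rmin_r d (hi - a)).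
    unfold t; lra. }
  destruct (MVT_cor2 f df a (a + t)) as [xi [Hmvt Hxi]]; [lra | |].
  { intros x Hx; apply is_derive_Reals, Hf; lra. }
  assert (0 < df xi) by (replace xi with (a + (xi - a)) by ring; apply Hpos; lra).
  assert (f (a + t) <= f a) by (apply Hmax; lra).
  nra.
Qed.

Lemma Derive2_on_interval (f df : R -> R) lo hi a l :
  lo < a < hi -> (forall x, lo < x < hi -> is_derive f x (df x)) ->
  is_derive df a l -> Derive (Derive f) a = l.
Proof.
  intros Ha Hf Hdf.
  rewrite (Derive_ext_loc _ df); [exact (is_derive_unique _ _ _ Hdf) |].
  apply (filter_imp (fun x => lo < x /\ x < hi)).
  - intros x Hx; exact (is_derive_unique _ _ _ (Hf x Hx)).
  - exact (open_and _ _ (open_gt lo) (open_lt hi) a Ha).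
Qed.

Lemma bernoulli_ineq n y : -1 <= y -> 1 + INR n * y <= (1 + y) ^ n.
Proof.
  intros Hy; induction n as [|n IH]; [simpl; lra |].
  rewrite S_INR; simpl pow; pose proof (pos_INR n); nra.
Qed.

Lemma pow_succ_ratio_le n : ((INR n + 2) / (INR n + 1)) ^ n <= INR n + 1.
Proof.
  pose proof (pos_INR n).
  set (q := ((INR n + 2) / (INR n + 1)) ^ n).
  assert (qpos : 0 < q) by (apply pow_lt, Rdiv_lt_0_compat; lra).
  assert (Hinv : q * (1 + - / (INR n + 2)) ^ n = 1).
  { unfold q; rewrite <- Rpow_mult_distr.
    replace (_ * _) with 1 by (field; lra); apply pow1. }
  assert (Hb : 2 / (INR n + 2) <= (1 + - / (INR n + 2)) ^ n).
  { replace (2 / (INR n + 2)) with (1 + INR n * - / (INR n + 2)) by (field; lra).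
    apply bernoulli_ineq.
    assert (/ (INR n + 2) <= 1) by (rewrite <- Rinv_1; apply Rinv_le_contravar; lra).
    lra. }
  assert (q * (2 / (INR n + 2)) <= 1)
    by (rewrite <- Hinv; apply Rmult_le_compat_l; lra).
  assert (q <= (INR n + 2) / 2).
  { apply (Rmult_le_reg_r (2 / (INR n + 2))); [apply Rdiv_lt_0_compat; lra |].
    replace ((INR n + 2) / 2 * (2 / (INR n + 2))) with 1 by (field; lra).
    lra. }
  lra.
Qed.

Lemma Rpower_half_sq x m : 0 < x -> Rpower x (INR m / 2) ^ 2 = x ^ m.
Proof.
  intros xpos.
  rewrite <- Rpower_pow by apply exp_pos.
  rewrite Rpower_mult, <- Rpower_pow by exact xpos.
  f_equal; simpl INR; field.
Qed.

Definition Bfun_d1 (h : R) (k : nat) (beta x : R) : R :=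
  h * INR k * x ^ pred k - sqrt 2 * beta * x / sqrt (1 - x ^ 2).

Definition Bfun_d2 (h : R) (k : nat) (beta x : R) : R :=
  h * INR k * INR (pred k) * x ^ pred (pred k)
  - sqrt 2 * beta / sqrt (1 - x ^ 2) ^ 3.

Lemma sqrt_1_minus_sq_pos x : -1 < x < 1 -> 0 < sqrt (1 - x ^ 2).
Proof. intros Hx; apply sqrt_lt_R0; nra. Qed.

Lemma is_derive_Bfun h k beta x :
  -1 < x < 1 -> is_derive (Bfun h k beta) x (Bfun_d1 h k beta x).
Proof.
  intros Hx; pose proof (sqrt_1_minus_sq_pos x Hx).
  unfold Bfun, f_pow, Bfun_d1; auto_derive; [nra |].
  replace (1 + - (x * (x * 1))) with (1 - x ^ 2) by ring.
  field; lra.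
Qed.

Lemma is_derive_Bfun_d1 h k beta x :
  -1 < x < 1 -> is_derive (Bfun_d1 h k beta) x (Bfun_d2 h k beta x).
Proof.
  intros Hx; pose proof (sqrt_1_minus_sq_pos x Hx).
  unfold Bfun_d1, Bfun_d2; auto_derive.
  - replace (1 + - (x * (x * 1))) with (1 - x ^ 2) by ring; split; [nra | lra].
  - replace (1 + - (x * (x * 1))) with (1 - x ^ 2) by ring.
    assert (Hs : sqrt (1 - x ^ 2) ^ 2 = 1 - x ^ 2) by (apply pow2_sqrt; nra).
    set (s := sqrt (1 - x ^ 2)) in *.
    replace (sqrt 2 * beta / s ^ 3) with (sqrt 2 * beta * (s ^ 2 + x ^ 2) / s ^ 3)
      by (rewrite Hs; field; lra).
    field; lra.
Qed.

Lemma Bfun_degenerate_critical_quadratic h beta a :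
  -1 < a < 1 -> Bfun_d1 h 2 beta a = 0 -> Bfun_d2 h 2 beta a = 0 ->
  sqrt 2 * beta = 2 * h.
Proof.
  intros Ha D1 D2; pose proof (sqrt_1_minus_sq_pos a Ha) as sp.
  assert (Hs : sqrt (1 - a ^ 2) ^ 2 = 1 - a ^ 2) by (apply pow2_sqrt; nra).
  unfold Bfun_d1, Bfun_d2 in *; simpl pred in *; simpl INR in *.
  set (s := sqrt (1 - a ^ 2)) in *; set (c := sqrt 2 * beta) in *.
  assert (Ec : c = 2 * h * s ^ 3).
  { rewrite pow_O in D2.
    replace c with (c / s ^ 3 * s ^ 3) by (field; lra).
    replace (c / s ^ 3) with (2 * h) by lra; ring. }
  assert (Ea : h * a ^ 3 = 0).
  { replace (c * a / s) with (2 * h * s ^ 2 * a) in D1 by (rewrite Ec; field; lra).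
    simpl in D1, Hs |- *; rewrite Hs in D1; lra. }
  destruct (Rmult_integral _ _ Ea) as [-> | Ea3]; [lra |].
  destruct (Req_dec a 0) as [-> | an]; [| contradiction (pow_nonzero a 3 an)].
  assert (s1 : s = 1) by (simpl in Hs; nra).
  rewrite Ec, s1; ring.
Qed.

Lemma Bfun_degenerate_critical_coupling h n beta a :
  (1 <= n)%nat -> 0 < beta -> -1 < a < 1 ->
  Bfun_d1 h (S (S n)) beta a = 0 -> Bfun_d2 h (S (S n)) beta a = 0 ->
  (sqrt 2 * beta) ^ 2
  = h ^ 2 * (INR n + 2) ^ 2 * (INR n / (INR n + 1)) ^ n / (INR n + 1).
Proof.
  intros n1 bpos Ha D1 D2; pose proof (sqrt_1_minus_sq_pos a Ha) as spos.
  assert (Hs : sqrt (1 - a ^ 2) ^ 2 = 1 - a ^ 2) by (apply pow2_sqrt; nra).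
  assert (cpos : 0 < sqrt 2 * beta)
    by (apply Rmult_lt_0_compat; [apply sqrt_lt_R0 |]; lra).
  pose proof (pos_INR n).
  unfold Bfun_d1, Bfun_d2 in *; simpl pred in *; rewrite !S_INR in *.
  set (s := sqrt (1 - a ^ 2)) in *; set (c := sqrt 2 * beta) in *.
  set (P := h * (INR n + 2) * a ^ n).
  assert (an : a <> 0).
  { intros ->; rewrite pow_i in D2 by lia.
    assert (0 < c / s ^ 3) by (apply Rdiv_lt_0_compat; [| apply pow_lt]; lra).
    lra. }
  assert (EP : P = c / s).
  { apply (Rmult_eq_reg_l a); [| exact an].
    replace (c * a / s) with (a * (c / s)) in D1 by (field; lra).
    unfold P; simpl pow in D1; lra. }
  assert (Ppos : 0 < P) by (rewrite EP; apply Rdiv_lt_0_compat; lra).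
  assert (Es : s ^ 2 = / (INR n + 1)).
  { replace (c / s ^ 3) with (P / s ^ 2) in D2 by (rewrite EP; field; lra).
    replace (h * (INR n + 1 + 1) * (INR n + 1) * a ^ n) with ((INR n + 1) * P)
      in D2 by (unfold P; ring).
    assert (Hz : P * ((INR n + 1) * s ^ 2 - 1) = 0).
    { replace (P * ((INR n + 1) * s ^ 2 - 1))
        with (s ^ 2 * ((INR n + 1) * P - P / s ^ 2)) by (field; lra).
      rewrite D2; ring. }
    destruct (Rmult_integral _ _ Hz) as [| Hs1]; [lra |].
    apply (Rmult_eq_reg_l (INR n + 1)); [field_simplify |]; lra. }
  assert (Ea : a ^ 2 = INR n / (INR n + 1))
    by (replace (a ^ 2) with (1 - s ^ 2) by lra; rewrite Es; field; lra).
  replace c with (P * s) by (rewrite EP; field; lra).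
  rewrite <- Ea, <- pow_mult, Nat.mul_comm, pow_mult, Rpow_mult_distr, Es.
  unfold P; field; lra.
Qed.

Lemma beta_c_ge3 h n : (1 <= n)%nat ->
  beta_c (S (S n)) h
  = Finite (h / sqrt 2 * ((INR n + 1) / INR n)
            * Rpower (1 - 1 / (INR n + 1) ^ 2) (INR (S (S n)) / 2)).
Proof.
  intros n1; destruct n as [|m]; [lia |].
  cbn [beta_c]; rewrite (S_INR (S (S m))) at 1 2 3; rewrite (S_INR (S m)).
  replace (INR (S m) + 1 + 1 - 1) with (INR (S m) + 1) by ring.
  replace (INR (S m) + 1 + 1 - 2) with (INR (S m)) by ring.
  reflexivity.
Qed.

Lemma beta_c_le_of_critical_coupling h n beta :
  (1 <= n)%nat -> 0 <= beta ->
  (sqrt 2 * beta) ^ 2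
  = h ^ 2 * (INR n + 2) ^ 2 * (INR n / (INR n + 1)) ^ n / (INR n + 1) ->
  Rbar_le (beta_c (S (S n)) h) beta.
Proof.
  intros n1 bnn Hc; rewrite beta_c_ge3 by exact n1; cbn [Rbar_le].
  assert (npos : 0 < INR n) by (apply lt_0_INR; lia).
  assert (s2 : sqrt 2 ^ 2 = 2) by (apply pow2_sqrt; lra).
  assert (s2pos : 0 < sqrt 2) by (apply sqrt_lt_R0; lra).
  set (x := 1 - 1 / (INR n + 1) ^ 2).
  set (p := (INR n / (INR n + 1)) ^ n) in Hc.
  set (q := ((INR n + 2) / (INR n + 1)) ^ n).
  assert (ppos : 0 < p) by (apply pow_lt, Rdiv_lt_0_compat; lra).
  assert (xe : x = INR n / (INR n + 1) * ((INR n + 2) / (INR n + 1)))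
    by (unfold x; field; lra).
  assert (xpos : 0 < x)
    by (rewrite xe; apply Rmult_lt_0_compat; apply Rdiv_lt_0_compat; lra).
  assert (xn : x ^ n = p * q) by (rewrite xe; apply Rpow_mult_distr).
  set (bc := h / sqrt 2 * ((INR n + 1) / INR n) * Rpower x (INR (S (S n)) / 2)).
  assert (Hbc : bc ^ 2
                = h ^ 2 * ((INR n + 2) / (INR n + 1)) ^ 2 * p * q / 2).
  { unfold bc; rewrite !Rpow_mult_distr, Rpower_half_sq by exact xpos.
    replace ((h / sqrt 2) ^ 2) with (h ^ 2 / sqrt 2 ^ 2) by (field; lra).
    change (x ^ S (S n)) with (x ^ (2 + n)).
    rewrite pow_add, xn, s2, xe; field; lra. }
  assert (qle : q <= INR n + 1) by apply pow_succ_ratio_le.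
  assert (bc ^ 2 <= beta ^ 2).
  { replace (beta ^ 2) with ((sqrt 2 * beta) ^ 2 / 2)
      by (rewrite Rpow_mult_distr, s2; field).
    rewrite Hbc, Hc.
    replace (h ^ 2 * (INR n + 2) ^ 2 * p / (INR n + 1) / 2)
      with (h ^ 2 * ((INR n + 2) / (INR n + 1)) ^ 2 * p * (INR n + 1) / 2)
      by (field; lra).
    assert (0 <= h ^ 2 * ((INR n + 2) / (INR n + 1)) ^ 2 * p)
      by (apply Rmult_le_pos; [apply Rmult_le_pos; apply pow2_ge_0 | lra]).
    nra. }
  nra.
Qed.

Lemma beta_c_le_of_degenerate_critical_point h k beta a :
  (1 <= k)%nat -> 0 < beta -> -1 < a < 1 ->
  Bfun_d1 h k beta a = 0 -> Bfun_d2 h k beta a = 0 ->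
  Rbar_le (beta_c k h) beta.
Proof.
  intros k1 bpos Ha D1 D2.
  assert (s2pos : 0 < sqrt 2) by (apply sqrt_lt_R0; lra).
  destruct k as [|[|[|m]]]; [lia | | |].
  - exfalso; unfold Bfun_d2 in D2; simpl pred in D2; change (INR 0) with 0 in D2.
    assert (0 < sqrt 2 * beta / sqrt (1 - a ^ 2) ^ 3).
    { apply Rdiv_lt_0_compat; [| apply pow_lt, sqrt_1_minus_sq_pos, Ha].
      apply Rmult_lt_0_compat; lra. }
    lra.
  - cbn [beta_c Rbar_le]; apply Req_le.
    apply (Rmult_eq_reg_l (sqrt 2)); [| lra].
    rewrite (Bfun_degenerate_critical_quadratic h beta a Ha D1 D2),
      <- Rmult_assoc, sqrt_sqrt; lra.
  - apply beta_c_le_of_critical_coupling; [lia | lra |].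
    apply (Bfun_degenerate_critical_coupling h (S m) beta a);
      [lia | lra | exact Ha | exact D1 | exact D2].
Qed.

Theorem lemma7p1 (h : R) (k : nat) (beta : R) :
  0 < h -> (1 <= k)%nat -> 0 < beta ->
  Rbar_lt (Finite beta) (beta_c k h) ->
  forall a : R, is_global_max_on_open_unit (Bfun h k beta) a ->
  Derive (Derive (Bfun h k beta)) a < 0.
Proof.
  intros _ k1 bpos Hbeta a [Ha Hmax].
  pose proof (is_derive_Bfun h k beta) as HB.
  pose proof (is_derive_Bfun_d1 h k beta a Ha) as HB1.
  rewrite (Derive2_on_interval _ _ _ _ a _ Ha HB HB1).
  assert (crit : Bfun_d1 h k beta a = 0)
    by exact (derive_eq0_at_interior_max _ _ _ a _ Ha (HB a Ha) Hmax).
  assert (concave : Bfun_d2 h k beta a <= 0)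
    by exact (derive2_nonpos_at_interior_max _ _ _ _ a _ Ha HB HB1 Hmax).
  destruct concave as [neg | degenerate]; [exact neg | exfalso].
  apply (Rbar_lt_not_le _ _ Hbeta).
  exact (beta_c_le_of_degenerate_critical_point h k beta a k1 bpos Ha crit degenerate).
Qed.
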